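(* If $\mathbf{X} \in \mathbb{R}^{m \times n}$ admits a factorization of the form \begin{equation} \mathbf{X} = \begin{bmatrix} \mathbf{u} & 0 \\ 0 & -\mathbf{u} \end{bmatrix} \begin{bmatrix} 0 & \mathbf{v}^{T} \\ \mathbf{v}^{T} & 0 \end{bmatrix} \end{equation} for some $\mathbf{v} \in \mathbb{R}^{n-1}$ and $\mathbf{u} \in \mathbb{R}^{m-1}$, then $\mathbf{X} \in \mathcal{N}(\mathscr{S}, 2)$.
   Context: Let $\mathscr{S} \colon \mathbb{R}^{m \times n} \to \mathbb{R}^{m+n-1}$ be the lifted linear convolution map, i.e. the linear operator with $(\mathscr{S}(\mathbf{W}))_k = \langle \mathbf{W}, \mathbf{S}_k \rangle$ for $1 \le k \le m+n-1$, where $(\mathbf{S}_k)_{ij} = 1$ if $i + j = k+1$ and $0$ otherwise ($1 \le i \le m$, $1 \le j \le n$); thus $\mathscr{S}$ sums the entries of its argument along anti-diagonals and satisfies $\mathscr{S}(\mathbf{x}\mathbf{y}^{T}) = \mathbf{x} \star \mathbf{y}$ (linear convolution). For a linear operator $\mathscr{S}$, $\mathcal{N}(\mathscr{S}, k) = \{\mathbf{X} \in \mathbb{R}^{m \times n} : \mathrm{rank}(\mathbf{X}) \le k,\ \mathscr{S}(\mathbf{X}) = \mathbf{0}\}$ denotes the rank $k$ null space. In the factorization, the left factor is $m \times 2$ with columns $(\mathbf{u}; 0)$ and $(0; -\mathbf{u})$, and the right factor is $2 \times n$ with rows $(0, \mathbf{v}^{T})$ and $(\mathbf{v}^{T}, 0)$.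 *)

From HB Require Import structures.
From mathcomp Require Import all_boot all_order all_algebra.
From mathcomp Require Import reals.
Set Implicit Arguments. Unset Strict Implicit. Unset Printing Implicit Defensive.
Import Order.TTheory GRing.Theory Num.Theory.
Local Open Scope ring_scope.

(* Lifted linear convolution map S : R^{m x n} -> R^{m+n-1}.
   With 0-based indices, (S_k)_{ij} = 1 iff i + j = k
   (1-based: i + j = k + 1). *)
Definition Smat {R : realType} (m n : nat) (k : nat) : 'M[R]_(m, n) :=
  \matrix_(i < m, j < n) ((nat_of_ord i + nat_of_ord j == k)%N)%:R.

Definition frob {R : realType} (m n : nat) (W S : 'M[R]_(m, n)) : R :=
  \sum_(i < m) \sum_(j < n) W i j * S i j.

Definition lifted_conv {R : realType} (m n : nat) (W : 'M[R]_(m, n))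
  : 'rV[R]_(m + n - 1) :=
  \row_(k < m + n - 1) frob W (Smat m n k).

Definition rank_null_space {R : realType} (m n p : nat)
  (S : 'M[R]_(m, n) -> 'rV[R]_p) (k : nat) : 'M[R]_(m, n) -> Prop :=
  fun X => (\rank X <= k)%N /\ S X = 0.

Definition left_factor {R : realType} (m' : nat) (u : 'cV[R]_m')
  : 'M[R]_(m'.+1, 1 + 1) :=
  row_mx (castmx (addn1 m', erefl 1%N) (col_mx u (0 : 'M[R]_(1, 1))))
         (col_mx (0 : 'M[R]_(1, 1)) (- u)).

Definition right_factor {R : realType} (n' : nat) (v : 'cV[R]_n')
  : 'M[R]_(1 + 1, n'.+1) :=
  col_mx (row_mx (0 : 'M[R]_(1, 1)) v^T)
         (castmx (erefl 1%N, addn1 n') (row_mx v^T (0 : 'M[R]_(1, 1)))).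

From HB Require Import structures.
From mathcomp Require Import all_boot all_order all_algebra.
From mathcomp Require Import reals.
Set Implicit Arguments.
Unset Strict Implicit.

Import Order.TTheory GRing.Theory Num.Theory.
Local Open Scope ring_scope.

(* Writing a = (u; 0), a' = (0; u), b = (v; 0) and b' = (0; v), the product of
   the two factors is a b'^T - a' b^T, of rank at most 2.  The lifted
   convolution of x y^T is the convolution x * y, and a * b' = a' * b since
   both are b * a shifted by one place: the anti-diagonal sums cancel. *)

Section Convolution.
Variable R : pzRingType.

Definition extcv (p : nat) (w : 'cV[R]_p) (i : nat) : R :=
  if insub i is Some k then w k 0 else 0.

Definition shiftn (f : nat -> R) (i : nat) : R :=
  if i is i'.+1 then f i' else 0.

Lemma extcv_ord (p : nat) (w : 'cV[R]_p) (i : 'I_p) : extcv w i = w i 0.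
Proof. by rewrite /extcv valK. Qed.

Lemma extcv_out (p : nat) (w : 'cV[R]_p) : extcv w p = 0.
Proof. by rewrite /extcv insubN // ltnn. Qed.

Lemma col_mx_ext0E (p : nat) (w : 'cV[R]_p) (i : 'I_(p + 1)) (z : 'I_1) :
  col_mx w 0 i z = extcv w i.
Proof.
rewrite -[i]splitK; case: (split i) => k /=.
  by rewrite col_mxEu extcv_ord (ord1 z).
by rewrite col_mxEd mxE (ord1 k) addn0 extcv_out.
Qed.

Lemma col_mx_0extE (p : nat) (w : 'cV[R]_p) (i : 'I_(1 + p)) (z : 'I_1) :
  col_mx 0 w i z = shiftn (extcv w) i.
Proof.
rewrite -[i]splitK; case: (split i) => k /=.
  by rewrite col_mxEu mxE (ord1 k).
by rewrite col_mxEd extcv_ord (ord1 z).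
Qed.

Lemma row_mx_ext0E (p : nat) (w : 'cV[R]_p) (z : 'I_1) (j : 'I_(p + 1)) :
  row_mx w^T 0 z j = extcv w j.
Proof. by rewrite -trmx0 -tr_col_mx mxE col_mx_ext0E. Qed.

Lemma row_mx_0extE (p : nat) (w : 'cV[R]_p) (z : 'I_1) (j : 'I_(1 + p)) :
  row_mx 0 w^T z j = shiftn (extcv w) j.
Proof. by rewrite -trmx0 -tr_col_mx mxE col_mx_0extE. Qed.

(* Both sides equal the sum of [f i * g j] over [i < m], [j < n], [i + j + 1 = k]. *)
Lemma sum_anti_diagonal_shift (f g : nat -> R) (m n k : nat) :
  f m = 0 -> g n = 0 ->
  \sum_(i < m.+1) \sum_(j < n.+1) f i * shiftn g j * (i + j == k)%N%:R =
  \sum_(i < m.+1) \sum_(j < n.+1) shiftn f i * g j * (i + j == k)%N%:R.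
Proof.
move=> fm0 gn0.
rewrite [LHS]big_ord_recr [RHS]big_ord_recl /=.
rewrite [X in _ + X = _]big1 ?addr0 => [|j _]; last by rewrite fm0 !mul0r.
rewrite [X in _ = X + _]big1 ?add0r => [|j _]; last by rewrite !mul0r.
apply: eq_bigr => i _.
rewrite [LHS]big_ord_recl [RHS]big_ord_recr /= gn0 !mulr0 !mul0r add0r addr0.
by apply: eq_bigr => j _; rewrite /bump /= !add1n addnS addSn.
Qed.

End Convolution.

Section Factorization.
Variables (R : realType) (m' n' : nat) (u : 'cV[R]_m') (v : 'cV[R]_n').

Lemma factorizationE (i : 'I_m'.+1) (j : 'I_n'.+1) :
  (left_factor u *m right_factor v) i j =
  extcv u i * shiftn (extcv v) j - shiftn (extcv u) i * extcv v j.
Proof.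
rewrite mxE big_ord_recr big_ord1 /= /left_factor /right_factor.
have -> : widen_ord (leqnSn 1) ord0 = lshift 1 (ord0 : 'I_1) by apply: val_inj.
have -> : ord_max = rshift 1 (ord0 : 'I_1) by apply: val_inj.
rewrite row_mxEl row_mxEr col_mxEu col_mxEd !castmxE /=.
have -> : col_mx (0 : 'M_1) (- u) = - col_mx 0 u by rewrite opp_col_mx oppr0.
rewrite col_mx_ext0E row_mx_0extE mxE col_mx_0extE row_mx_ext0E /=.
by rewrite mulNr.
Qed.

Lemma lifted_conv_factorization :
  lifted_conv (left_factor u *m right_factor v) = 0.
Proof.
apply/rowP => k; rewrite !mxE /frob.
under eq_bigr => i _ do under eq_bigr => j _ do
  rewrite factorizationE mxE mulrBl.
under eq_bigr => i _ do rewrite sumrB.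
by rewrite sumrB sum_anti_diagonal_shift ?extcv_out ?subrr.
Qed.

End Factorization.

Theorem proposition2 (R : realType) (m' n' : nat)
  (X : 'M[R]_(m'.+1, n'.+1)) (u : 'cV[R]_m') (v : 'cV[R]_n') :
  X = left_factor u *m right_factor v ->
  rank_null_space (@lifted_conv R m'.+1 n'.+1) 2 X.
Proof.
move=> ->; split; last exact: lifted_conv_factorization.
exact: leq_trans (mxrankM_maxl _ _) (rank_leq_col _).
Qed.
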